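(* For every integer $m\ge 1$, $$\sum_{b=0}^{m}\sum_{d=0}^{b}\sum_{a=d}^{m-b}(-1)^{a-d}\binom{m-b}{a}\binom{a+b-d}{b}\binom{b}{d}=1.$$ *)

From mathcomp Require Import all_boot all_order all_algebra.

From mathcomp Require Import all_boot all_order all_algebra.
From mathcomp Require Import zify ring.
Import GRing.Theory.
Local Open Scope ring_scope.

(* Fix b and put n = m - b.  After exchanging the sums over a and d, the inner
   sum \sum_d (-1)^d C(b,d) C(a+b-d,b) is the b-th finite difference of the
   degree-b polynomial x |-> C(x,b), hence equals 1 for every a.  What remains is
   the alternating sum \sum_a (-1)^a C(n,a) = [n = 0], so only b = m contributes. *)

Section SignedBinomialSums.
Variable R : comPzRingType.

Lemma sum_signed_bin (n : nat) :
  \sum_(0 <= i < n.+1) (-1) ^+ i * 'C(n, i)%:R = (n == 0)%:R :> R.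
Proof.
have -> : (n == 0)%:R = (1 - 1) ^+ n :> R by rewrite subrr expr0n.
rewrite exprDn big_mkord.
by apply: eq_bigr => i _; rewrite expr1n mul1r mulr_natr.
Qed.

(* Pascal's rule: the (n+1)-th finite difference of f is the n-th finite
   difference of f i - f i.+1. *)
Lemma sum_signed_binS (n : nat) (f : nat -> R) :
  \sum_(0 <= i < n.+2) (-1) ^+ i * 'C(n.+1, i)%:R * f i
  = \sum_(0 <= i < n.+1) (-1) ^+ i * 'C(n, i)%:R * (f i - f i.+1).
Proof.
pose g i : R := (-1) ^+ i * 'C(n, i)%:R * f i.
have g_shift : \sum_(0 <= i < n.+1) g i.+1 = \sum_(0 <= i < n.+1) g i - g 0%N.
  rewrite [in RHS]big_nat_recl // big_nat_recr //= {2}/g bin_small //.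
  by rewrite mulr0 mul0r addr0 addrC addKr.
have pascal : \sum_(0 <= i < n.+1) (-1) ^+ i.+1 * 'C(n.+1, i.+1)%:R * f i.+1
    = - \sum_(0 <= i < n.+1) (-1) ^+ i * 'C(n, i)%:R * f i.+1
      + \sum_(0 <= i < n.+1) g i.+1.
  rewrite -sumrN -big_split /=; apply: eq_big_nat => i _.
  by rewrite binS natrD /g exprS; ring.
rewrite big_nat_recl // pascal g_shift.
under [RHS]eq_big_nat do rewrite mulrBr.
by rewrite sumrB /g !bin0; ring.
Qed.

Lemma sum_signed_bin_bin (a b : nat) :
  \sum_(0 <= d < b.+1) (-1) ^+ d * 'C(b, d)%:R * 'C(a + b - d, b)%:R = 1 :> R.
Proof.
elim: b => [|b IH]; first by rewrite big_nat1 !bin0 expr0 !mulr1.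
rewrite sum_signed_binS -[RHS]IH; apply: eq_big_nat => d /andP[_ le_d_b].
rewrite addnS subSS subSn; last by lia.
by rewrite binS natrD addrC addKr.
Qed.

Lemma sum_signed_bin3 (n b : nat) :
  \sum_(0 <= d < b.+1) \sum_(d <= a < n.+1)
    (-1) ^+ (a - d) * ('C(n, a) * 'C(a + b - d, b) * 'C(b, d))%:R
  = (n == 0)%:R :> R.
Proof.
transitivity (\sum_(0 <= a < n.+1) ((-1) ^+ a * 'C(n, a)%:R *
   \sum_(0 <= d < b.+1) (-1) ^+ d * 'C(b, d)%:R * 'C(a + b - d, b)%:R : R));
  last first.
  under eq_big_nat do rewrite sum_signed_bin_bin mulr1.
  exact: sum_signed_bin.
under [RHS]eq_big_nat do rewrite mulr_sumr.
rewrite exchange_big_nat; apply: eq_big_nat => d /andP[_ le_d_b].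
rewrite (big_nat_widenl _ 0) // big_mkcond /=; apply: eq_big_nat => a _.
case: leqP => [le_d_a | lt_a_d].
  by rewrite -signr_odd oddB // signr_addb !signr_odd !natrM; ring.
by rewrite (bin_small (_ : a + b - d < b)%N) ?muln0 ?mul0n ?mulr0 //; lia.
Qed.

End SignedBinomialSums.

Theorem mainTheorem4 (m : nat) (hm : (1 <= m)%N) :
  \sum_(0 <= b < m.+1) \sum_(0 <= d < b.+1) \sum_(d <= a < (m - b).+1)
    ((-1) ^+ (a - d) * ('C(m - b, a) * 'C(a + b - d, b) * 'C(b, d))%:R : int)
  = 1.
Proof.
under eq_big_nat do rewrite sum_signed_bin3.
rewrite big_nat_recr //= subnn big1_seq ?add0r // => b /andP[_].
by rewrite mem_index_iota => /andP[_ lt_b_m]; rewrite subn_eq0 leqNgt lt_b_m.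
Qed.
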